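(* Let $\mathcal I$ be an ideal on $\mathbb N$ with the Baire property, and let $\sum_n x_n$ be a series in a Banach space $X$. Then $\sum_n x_n$ is unconditionally convergent if and only if the set $$A(\mathcal I,(x_n)):=\left\{t \in \{0,1\}^{\mathbb N} \colon \sum_n t(n)x_n \text{ is } \mathcal I\text{-convergent}\right\}$$ is nonmeager in $\{0,1\}^{\mathbb N}$.
   Context: $\mathbb N=\{1,2,\dots\}$. An ideal on $\mathbb N$ is a family $\mathcal I\subset\mathcal P(\mathbb N)$ closed under finite unions and subsets, with $\mathbb N\notin\mathcal I$ and containing all finite subsets of $\mathbb N$. Identifying subsets of $\mathbb N$ with their characteristic functions, $\mathcal I$ is regarded as a subset of the Cantor space $\{0,1\}^{\mathbb N}$ (product topology), and ''$\mathcal I$ has the Baire property'' refers to this subset. A sequence $(y_n)$ in a normed space is $\mathcal I$-convergent to $y$ if $\{n:\|y_n-y\|>\varepsilon\}\in\mathcal I$ for every $\varepsilon>0$; a series is $\mathcal I$-convergent if its sequence of partial sums is $\mathcal I$-convergent to some element. A series $\sum_n x_n$ is unconditionally convergent if $\sum_n x_{p(n)}$ converges for every permutation $p$ of $\mathbb N$. Banach spaces are over $\mathbb R$. *)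

From HB Require Import structures.
From mathcomp Require Import all_boot all_order all_algebra.
From mathcomp Require Import all_classical all_reals all_analysis.
From mathcomp Require Import Rstruct Rstruct_topology.
From Stdlib Require Import Rdefinitions.
Import Order.TTheory GRing.Theory Num.Theory.
Import numFieldNormedType.Exports.

Set Implicit Arguments.
Unset Strict Implicit.
Unset Printing Implicit Defensive.

Local Open Scope classical_set_scope.
Local Open Scope ring_scope.

(* An ideal on the index set (indices are shifted: library index n stands
   for the paper's n+1). *)
Definition is_ideal (I : set (set nat)) : Prop :=
  [/\ (forall A B, I A -> I B -> I (A `|` B)),
      (forall A B, B `<=` A -> I A -> I B),
      ~ I setT &
      (forall A, finite_set A -> I A)].

Definition nowhere_dense (T : topologicalType) (A : set T) : Prop :=
  interior (closure A) = set0.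

Definition meager (T : topologicalType) (A : set T) : Prop :=
  exists F : nat -> set T,
    (forall n, nowhere_dense (F n)) /\ A `<=` \bigcup_n F n.

Definition baire_property (T : topologicalType) (A : set T) : Prop :=
  exists U : set T, open U /\ meager ((A `\` U) `|` (U `\` A)).

Definition ideal_in_cantor (I : set (set nat)) : set cantor_space :=
  [set t | I [set n | t n]].

Definition Iconverges_to (K : numDomainType) (V : normedModType K)
    (I : set (set nat)) (y : nat -> V) (l : V) : Prop :=
  forall eps : K, 0 < eps -> I [set n | eps < `|y n - l|].

Definition Iconvergent (K : numDomainType) (V : normedModType K)
    (I : set (set nat)) (y : nat -> V) : Prop :=
  exists l : V, Iconverges_to I y l.

Definition series_Iconvergent (K : numDomainType) (V : normedModType K)
    (I : set (set nat)) (x : nat -> V) : Prop :=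
  Iconvergent I (series x).

Definition unconditionally_convergent (K : numDomainType) (V : normedModType K)
    (x : nat -> V) : Prop :=
  forall p : nat -> nat, bijective p -> cvg (series (fun n => x (p n)) @ \oo).

Definition A_set (V : normedModType R) (I : set (set nat)) (x : nat -> V)
    : set cantor_space :=
  [set t : cantor_space |
     series_Iconvergent I (fun n => ((t n : nat)%:R : R) *: x n)].

(** A series is subseries-Cauchy when the masked sums
    [\sum_(a <= i < b) t i *: x i], over all 0-1 masks [t], are uniformly
    small for large [a]. In a Banach space this is unconditional convergence:
    if it fails, windows with large masked sums can be moved to the front of
    consecutive blocks by a blockwise permutation, and the rearranged series
    is not Cauchy.

    If [x] is subseries-Cauchy, every masked series converges, so
    [A_set I x] is the whole Cantor space, which is not meager by Baire's
    theorem. Conversely, an ideal with the Baire property is meager: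
    otherwise it would be comeager in some cylinder, and so would its image
    under flipping all coordinates beyond the length of the cylinder; but a
    set and its flip cannot both lie in [I], since together with an initial
    segment they cover [nat]. By Talagrand's characterization there are then
    blocks [[n k, n k.+1)] such that every set of [I] misses a point in all
    but finitely many blocks. If [x] is not subseries-Cauchy, comeager many
    masks vanish on two arbitrarily late blocks and carry a masked sum
    [>= eps] in between. For such a mask in [A_set I x], with I-limit [l],
    the partial sums are constant on each of the two blocks and, applying
    the block property to [[set m | eps / 3 < `|S m - l|]], within [eps / 3]
    of [l] there: a contradiction. *)

From HB Require Import structures.
From mathcomp Require Import all_boot all_order all_algebra.
From mathcomp Require Import all_classical all_reals all_analysis.
From mathcomp Require Import Rstruct Rstruct_topology.
From Stdlib Require Import Rdefinitions.
From mathcomp Require Import lra.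
Import Order.TTheory GRing.Theory Num.Theory.

Set Implicit Arguments.
Unset Strict Implicit.
Unset Printing Implicit Defensive.

Local Open Scope classical_set_scope.
Local Open Scope ring_scope.

(** * Blocks of strictly increasing sequences and finite sums *)

Lemma incr_geq_id (f : nat -> nat) : (forall k, (f k < f k.+1)%nat) ->
  forall k, (k <= f k)%nat.
Proof. by move=> hf; elim=> // k IH; exact: leq_ltn_trans IH (hf k). Qed.

Lemma incr_homo_leq (f : nat -> nat) : (forall k, (f k < f k.+1)%nat) ->
  {homo f : j k / (j <= k)%nat}.
Proof. by move=> hf; apply: homo_leq => // [j k l|k]; [exact: leq_trans|exact: ltnW]. Qed.

Lemma incr_block_uniq (f : nat -> nat) : (forall k, (f k < f k.+1)%nat) ->
  forall k k' i, (f k <= i < f k.+1)%nat -> (f k' <= i < f k'.+1)%nat -> k = k'.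
Proof.
move=> hf k k' i /andP[ki ik] /andP[k'i ik'].
have le := incr_homo_leq hf.
case: (ltngtP k k') => // [kk'|k'k]; exfalso.
- by move: (leq_trans (le _ _ kk') k'i); rewrite leqNgt ik.
- by move: (leq_trans (le _ _ k'k) ki); rewrite leqNgt ik'.
Qed.

Lemma incr_block_exists (c : nat -> nat) : c 0%nat = 0%nat ->
  (forall k, (c k < c k.+1)%nat) -> forall n, exists k, (c k <= n < c k.+1)%nat.
Proof.
move=> c0 c_incr; elim=> [|n [k /andP[kn nk]]].
  by exists 0%nat; have := c_incr 0%nat; rewrite c0.
case: (ltnP n.+1 (c k.+1)) => [n1k|kn1]; first by exists k; rewrite n1k (leq_trans kn).
by exists k.+1; rewrite kn1 (leq_ltn_trans _ (c_incr k.+1)) // -ltnS (leq_trans kn1).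
Qed.

Lemma blockwise_perm (c : nat -> nat) (s : nat -> seq nat) : c 0%nat = 0%nat ->
  (forall k, (c k < c k.+1)%nat) ->
  (forall k, perm_eq (s k) (index_iota (c k) (c k.+1))) ->
  exists2 p : nat -> nat, bijective p & forall k i, (i < c k.+1 - c k)%nat ->
    p (c k + i)%nat = nth 0%nat (s k) i.
Proof.
move=> c0 c_incr s_perm.
have /choice[blk blkP] := incr_block_exists c0 c_incr.
have blkE k n : (c k <= n < c k.+1)%nat -> blk n = k.
  by move=> /(incr_block_uniq c_incr (blkP n)).
have size_s k : size (s k) = (c k.+1 - c k)%nat by rewrite (perm_size (s_perm k)) size_iota.
have mem_s k n : (n \in s k) = (c k <= n < c k.+1)%nat.
  by rewrite (perm_mem (s_perm k)) mem_index_iota.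
have in_block k i : (i < c k.+1 - c k)%nat -> (c k <= c k + i < c k.+1)%nat.
  by rewrite leq_addr /= -ltn_subRL.
pose p n := nth 0%nat (s (blk n)) (n - c (blk n)).
pose q n := (c (blk n) + index n (s (blk n)))%nat.
have pE k i : (i < c k.+1 - c k)%nat -> p (c k + i)%nat = nth 0%nat (s k) i.
  by move=> /in_block /blkE; rewrite /p => ->; rewrite addKn.
exists p => //; exists q => n; rewrite /p /q; have /andP[kn nk] := blkP n.
  have : nth 0%nat (s (blk n)) (n - c (blk n)) \in s (blk n).
    by rewrite mem_nth // size_s ltn_sub2r.
  rewrite mem_s => /blkE ->; rewrite index_uniq ?subnKC // ?size_s ?ltn_sub2r //.
  by rewrite (perm_uniq (s_perm _)) iota_uniq.
have ix : (index n (s (blk n)) < c (blk n).+1 - c (blk n))%nat.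
  by rewrite -size_s index_mem mem_s kn.
by rewrite (blkE _ _ (in_block _ _ ix)) addKn nth_index // mem_s kn.
Qed.

Lemma blockwise_front_perm (Z : nmodType) (c : nat -> nat) (P : nat -> pred nat) :
  c 0%nat = 0%nat -> (forall k, (c k < c k.+1)%nat) ->
  exists2 p : nat -> nat, bijective p & forall k, exists r, forall F : nat -> Z,
    \sum_(c k <= i < c k + r) F (p i) = \sum_(c k <= i < c k.+1 | P k i) F i.
Proof.
move=> c0 c_incr.
pose front k := [seq i <- index_iota (c k) (c k.+1) | P k i].
pose s k := front k ++ [seq i <- index_iota (c k) (c k.+1) | predC (P k) i].
have s_perm k : perm_eq (s k) (index_iota (c k) (c k.+1)) by rewrite perm_filterC.
have [p pbij pE] := blockwise_perm c0 c_incr s_perm.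
exists p => // k; exists (size (front k)) => F.
have size_front : (size (front k) <= c k.+1 - c k)%nat.
  by rewrite size_filter -(size_iota (c k) (c k.+1 - c k)) count_size.
rewrite -[RHS]big_filter -/(front k) [RHS](big_nth 0%nat).
rewrite -{1}(add0n (c k)) big_addn addKn; apply: eq_big_nat => i /andP[_ ifr].
by rewrite addnC pE ?(leq_trans ifr size_front) // nth_cat ifr.
Qed.

Lemma sum_comp_inj (Z : nmodType) (F : nat -> Z) (p : nat -> nat) a b N K :
  injective p -> (forall k, (a <= k < b)%nat -> (N <= p k < K)%nat) ->
  \sum_(a <= k < b) F (p k) =
  \sum_(N <= i < K | i \in map p (index_iota a b)) F i.
Proof.
move=> pinj pab; rewrite -(big_map p xpredT) -[RHS]big_filter; apply: perm_big.
apply: uniq_perm; rewrite ?filter_uniq ?map_inj_uniq ?iota_uniq // => i.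
rewrite mem_filter andb_idr // => /mapP[k]; rewrite mem_index_iota => /pab + ->.
by rewrite mem_index_iota.
Qed.

Lemma big_nat_window (Z : nmodType) (F : nat -> Z) (P : pred nat) m a b m' :
  (m <= a)%nat -> (b <= m')%nat ->
  \sum_(m <= i < m' | (a <= i < b)%nat && P i) F i = \sum_(a <= i < b | P i) F i.
Proof.
move=> ma bm'; rewrite (big_nat_widen _ _ _ _ _ bm') (big_nat_widenl _ _ _ _ _ ma).
by apply: eq_bigl => i; case: (P i); case: (a <= i)%nat; case: (i < b)%nat.
Qed.

Lemma series_eq_on_zeros (Z : zmodType) (u : nat -> Z) m m' :
  (forall i, (m <= i < m')%nat -> u i = 0) ->
  forall i, (m <= i <= m')%nat -> series u i = series u m.
Proof.
move=> u0 i /andP[mi im']; apply/eqP; rewrite -subr_eq0 sub_series_geq //.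
rewrite big_nat_cond big1 // => k /andP[/andP[mk ki] _]; apply: u0.
by rewrite mk (leq_trans ki im').
Qed.

(** * Category in the Cantor space *)

Definition cylinder (g : nat -> bool) (N : nat) : set cantor_space :=
  [set s | forall i, (i < N)%nat -> s i = g i].

Lemma sub_cylinder h M g N : (N <= M)%nat ->
  (forall i, (i < N)%nat -> h i = g i) -> cylinder h M `<=` cylinder g N.
Proof. by move=> NM hg s hs i iN; rewrite hs ?hg // (leq_trans iN NM). Qed.

Lemma open_cylinder g N : open (cylinder g N).
Proof.
elim: N => [|N IH].
  have -> : cylinder g 0 = setT by rewrite eqEsubset; split => s.
  exact: openT.
have -> : cylinder g N.+1 =
    cylinder g N `&` (fun s : cantor_space => s N) @^-1` [set g N].
  rewrite eqEsubset; split => s /=.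
    by move=> sg; split; [apply: sub_cylinder sg|apply: sg].
  move=> [sg sN] i; rewrite ltnS leq_eqVlt => /orP[/eqP ->|]; first exact: sN.
  exact: sg.
apply: openI => //; apply: (proj1 (continuousP _)); last exact: discrete_open.
by move=> s; exact: (@proj_continuous nat (fun _ => bool) N s).
Qed.

Lemma nbhs_cylinder (t : cantor_space) (U : set cantor_space) :
  nbhs t U -> exists N, cylinder t N `<=` U.
Proof.
move=> Ut; apply: contrapT => noN.
have /choice[f fP] : forall N, exists s, cylinder t N s /\ ~ U s.
  move=> N; apply: contrapT => nos; apply: noN; exists N => s ts.
  by apply: contrapT => nUs; apply: nos; exists s.
have ft : f @ \oo --> t.
  apply/cvg_sup => i V [W] [[Z] _ <-] WfN WV.
  apply: (filterS WV); rewrite nbhs_simpl; exists i.+1 => // n /= ni.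
  by rewrite /= (proj1 (fP n)).
have [N _ /(_ N (leqnn N)) UfN] := ft U Ut.
exact: (proj2 (fP N)).
Qed.

Definition cyl_nowhere_dense (D : set cantor_space) : Prop :=
  forall g N, exists h M, [/\ (N <= M)%nat, (forall i, (i < N)%nat -> h i = g i) &
    forall s, cylinder h M s -> ~ D s].

Lemma nowhere_denseP (D : set cantor_space) :
  nowhere_dense D <-> cyl_nowhere_dense D.
Proof.
split => [ndD g N|cD].
  have [h [ghN nDh]] : exists h, cylinder g N h /\ ~ closure D h.
    apply: contrapT => noh.
    suff : interior (closure D) g by rewrite ndD.
    apply: (@filterS _ _ _ (cylinder g N)).
      by move=> s gs; apply: contrapT => nDs; apply: noh; exists s.
    by apply: open_nbhs_nbhs; split; [exact: open_cylinder|].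
  have [B [hB DB0]] : exists B, nbhs h B /\ ~ (D `&` B !=set0).
    apply: contrapT => noB; apply: nDh => B hB; apply: contrapT => DB0.
    by apply: noB; exists B.
  have [M hMB] := nbhs_cylinder hB.
  exists h, (maxn M N); split => //; first exact: leq_maxr.
  move=> s hs Ds; apply: DB0; exists s; split => //; apply: hMB.
  by apply: sub_cylinder hs => //; exact: leq_maxl.
rewrite /nowhere_dense eqEsubset; split => // g /nbhs_cylinder[N gND].
have [h [M [NM hg hD]]] := cD g N.
have /(_ (cylinder h M))[] : closure D h by apply: gND => i iN; rewrite hg.
  by apply: open_nbhs_nbhs; split; [exact: open_cylinder|].
by move=> s [Ds hs]; exact: hD hs Ds.
Qed.

Lemma cyl_nowhere_dense_sub A B : A `<=` B ->
  cyl_nowhere_dense B -> cyl_nowhere_dense A.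
Proof.
move=> AB cB g N; have [h [M [NM hg hB]]] := cB g N.
by exists h, M; split => // s hs /AB; exact: hB.
Qed.

Lemma cyl_nowhere_denseU A B : cyl_nowhere_dense A -> cyl_nowhere_dense B ->
  cyl_nowhere_dense (A `|` B).
Proof.
move=> cA cB g N; have [h [M [NM hg hA]]] := cA g N.
have [h' [M' [MM' hh' hB]]] := cB h M.
exists h', M'; split; first exact: leq_trans MM'.
  by move=> i iN; rewrite hh' ?hg // (leq_trans iN NM).
move=> s hs [As|Bs]; last exact: hB hs Bs.
by apply: (hA s) => //; apply: sub_cylinder hs.
Qed.

Lemma cyl_nowhere_dense_bigcup (F : nat -> set cantor_space) k :
  (forall j, cyl_nowhere_dense (F j)) ->
  cyl_nowhere_dense (\bigcup_(j in [set j | (j <= k)%nat]) F j).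
Proof.
move=> cF; elim: k => [|k IH].
  by apply: cyl_nowhere_dense_sub (cF 0%nat) => s [j /= /[!leqn0] /eqP ->].
apply: cyl_nowhere_dense_sub (cyl_nowhere_denseU IH (cF k.+1)) => s [j /=].
by rewrite leq_eqVlt => /predU1P[-> Fs|jk Fs]; [right|left; exists j].
Qed.

Lemma meager_sub (T : topologicalType) (A B : set T) :
  A `<=` B -> meager B -> meager A.
Proof. by move=> AB [F [ndF BF]]; exists F; split => //; exact: subset_trans BF. Qed.

Lemma meagerU (T : topologicalType) (A B : set T) :
  meager A -> meager B -> meager (A `|` B).
Proof.
move=> [F [ndF AF]] [G [ndG BG]].
exists (fun n => if odd n then F n./2 else G n./2); split.
  by move=> n; case: (odd n).
move=> s [/AF [n _ Fn]|/BG [n _ Gn]].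
  by exists n.*2.+1 => //=; rewrite odd_double /= uphalf_double.
by exists n.*2 => //=; rewrite odd_double half_double.
Qed.

Lemma cylinder_not_meager g N : ~ meager (cylinder g N).
Proof.
move=> [F [ndF gNF]].
have /choice[next nextP] : forall jc : nat * ((nat -> bool) * nat),
    exists c : (nat -> bool) * nat, [/\ (jc.2.2 < c.2)%nat,
      cylinder c.1 c.2 `<=` cylinder jc.2.1 jc.2.2 &
      forall s, cylinder c.1 c.2 s -> ~ F jc.1 s].
  move=> [j [h M]]; have [h' [M' [MM' hh' hF]]] := proj1 (nowhere_denseP _) (ndF j) h M.
  exists (h', M'.+1); split => //= [|s hs].
    exact: sub_cylinder (leq_trans MM' (leqnSn _)) hh'.
  by apply: hF; apply: sub_cylinder hs.
(* Decreasing cylinders, the [j.+1]-st one avoiding [F j]; [t] is their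
   common point. *)
pose c := fix c j := if j is j'.+1 then next (j', c j') else (g, N).
have nested : {homo c : j k / (j <= k)%nat >->
    cylinder k.1 k.2 `<=` cylinder j.1 j.2}.
  apply: homo_leq => [? //|y x z xy yz|j]; first exact: subset_trans yz xy.
  by have [] := nextP (j, c j).
have c_len j : (j <= (c j).2)%nat.
  by apply: (incr_geq_id (f := fun j => (c j).2)) => k; have [] := nextP (k, c k).
pose t i := (c i.+1).1 i.
have tc j : cylinder (c j).1 (c j).2 t.
  move=> i ij; set k := maxn j i.+1.
  have ck : cylinder (c k).1 (c k).2 (c k).1 by [].
  rewrite /t -(nested _ _ (leq_maxl j i.+1) _ ck i ij).
  by rewrite (nested _ _ (leq_maxr j i.+1) _ ck i (c_len i.+1)).
have [j _ Fjt] := gNF t (tc 0%nat).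
by have [_ _] := nextP (j, c j); apply; [exact: tc j.+1|].
Qed.

Definition flip_tail (N : nat) (s : cantor_space) : cantor_space :=
  fun i => if (i < N)%nat then s i else ~~ s i.

Lemma flip_tailK N : involutive (flip_tail N).
Proof.
move=> s; apply: functional_extensionality_dep => i; rewrite /flip_tail.
by case: ifP => iN; rewrite iN // negbK.
Qed.

Lemma cylinder_flip_tail N g M s :
  cylinder (flip_tail N g) M (flip_tail N s) <-> cylinder g M s.
Proof.
split => gs i /gs; rewrite /flip_tail; case: ifP => // _; first exact: negb_inj.
by move=> ->.
Qed.

Lemma meager_flip_tail N (A : set cantor_space) :
  meager A -> meager (flip_tail N @^-1` A).
Proof.
move=> [F [ndF AF]]; exists (fun n => flip_tail N @^-1` F n); split; last first.
  by move=> s /AF[n _ Fn]; exists n.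
move=> n; apply/nowhere_denseP => g M.
have [h [M' [MM' hg hF]]] := proj1 (nowhere_denseP _) (ndF n) (flip_tail N g) M.
exists (flip_tail N h), M'; split => // [i iM|s hs].
  by rewrite -[g i](congr1 (fun s => s i) (flip_tailK N g)) /flip_tail hg //; case: ifP.
by apply: hF; rewrite -(flip_tailK N h); exact/cylinder_flip_tail.
Qed.

(** * Meager ideals *)

Lemma ideal_flip_tail I N s : is_ideal I ->
  ideal_in_cantor I s -> ~ ideal_in_cantor I (flip_tail N s).
Proof.
move=> [IU _ IT Ifin] Is Ifs; apply: IT.
have -> : setT = [set n | s n] `|` [set n | flip_tail N s n] `|` `I_N.
  rewrite eqEsubset; split => // n _; case: (ltnP n N) => nN; first by right.
  by left; rewrite /flip_tail /= ltnNge nN /=; case: (s n); [left|right].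
by apply: (IU); [exact: IU|exact: Ifin (finite_II N)].
Qed.

Lemma ideal_meager I : is_ideal I -> baire_property (ideal_in_cantor I) ->
  meager (ideal_in_cantor I).
Proof.
move=> II [U [oU mBU]]; set B := ideal_in_cantor I.
have [[u Uu]|noU] := pselect (U !=set0); last first.
  by apply: meager_sub mBU => s Bs; left; split => // Us; apply: noU; exists s.
have [N uNU] : exists N, cylinder u N `<=` U.
  by apply: nbhs_cylinder; apply: open_nbhs_nbhs.
have mC : meager (cylinder u N `\` B).
  by apply: meager_sub mBU => s [us nBs]; right; split => //; exact: uNU.
exfalso; apply: (@cylinder_not_meager u N).
apply: meager_sub (meagerU mC (meager_flip_tail N mC)) => s us.
have [Bs|] := pselect (B s); last by left.
right; split; last exact: ideal_flip_tail.
by move=> i iN; rewrite /flip_tail iN; exact: us.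
Qed.

Lemma cyl_nowhere_dense_prefixes D (L : seq (seq bool)) n :
  cyl_nowhere_dense D -> exists tau M, (n < M)%nat /\
    forall p, p \in L -> forall s : cantor_space,
      (forall i, (i < n)%nat -> s i = nth false p i) ->
      (forall i, (n <= i < M)%nat -> s i = tau i) -> ~ D s.
Proof.
move=> cD; elim: L => [|p L [tau [M [nM LD]]]].
  by exists (fun=> false), n.+1; split => // p; rewrite in_nil.
pose g i := if (i < n)%nat then nth false p i else tau i.
have [h [M' [MM' hg hD]]] := cD g M.
exists h, M'; split; first exact: leq_trans MM'.
move=> q; rewrite in_cons => /predU1P[-> s sp sh|qL s sq sh].
  apply: hD => i iM'; case: (ltnP i n) => iN; last by rewrite sh ?iN.
  by rewrite sp // hg /g ?iN // (leq_trans iN (ltnW nM)).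
apply: (LD q qL s sq) => i /andP[ni iM].
by rewrite sh ?ni ?(leq_trans iM MM') // hg // /g ltnNge ni.
Qed.

Lemma cyl_nowhere_dense_window D n : cyl_nowhere_dense D -> exists tau M,
  (n < M)%nat /\ forall s : cantor_space,
    (forall i, (n <= i < M)%nat -> s i = tau i) -> ~ D s.
Proof.
move=> /(cyl_nowhere_dense_prefixes (map val (enum {: n.-tuple bool})) n).
move=> [tau [M [nM D0]]]; exists tau, M; split => // s sM.
have sz : size (mkseq s n) == n by rewrite size_mkseq.
apply: (D0 (mkseq s n)) => // [|i iN]; last by rewrite nth_mkseq.
by apply/mapP; exists (Tuple sz); rewrite ?mem_enum.
Qed.

(* One half of Talagrand's characterization of meager ideals. *)
Lemma meager_ideal_blocks I : is_ideal I -> meager (ideal_in_cantor I) ->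
  exists n : nat -> nat, (forall k, (n k < n k.+1)%nat) /\
    forall S, I S -> exists j, forall k, (j <= k)%nat ->
      exists2 i, (n k <= i < n k.+1)%nat & ~ S i.
Proof.
move=> [_ Isub _ _] [F [ndF IF]].
have /choice[next nextP] : forall km : nat * nat, exists c : (nat -> bool) * nat,
    (km.2 < c.2)%nat /\ forall s : cantor_space,
      (forall i, (km.2 <= i < c.2)%nat -> s i = c.1 i) ->
      ~ (\bigcup_(j in [set j | (j <= km.1)%nat]) F j) s.
  move=> [k m].
  have cF j : cyl_nowhere_dense (F j) by apply/nowhere_denseP.
  have [tau [M]] := cyl_nowhere_dense_window m (cyl_nowhere_dense_bigcup k cF).
  by exists (tau, M).
pose n := fix n k := if k is k'.+1 then (next (k', n k')).2 else 0%nat.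
have n_incr k : (n k < n k.+1)%nat by have [] := nextP (k, n k).
exists n; split => // S IS; apply: contrapT => noj.
have full j : exists2 k, (j <= k)%nat &
    forall i, (n k <= i < n k.+1)%nat -> S i.
  apply: contrapT => nok; apply: noj; exists j => k jk.
  apply: contrapT => noi; apply: nok; exists k => // i ik.
  by apply: contrapT => nSi; apply: noi; exists i.
(* [t] is in the ideal, hence in some [F j], but on a block [k >= j] inside
   [S] it follows the pattern that keeps it out of [F j]. *)
pose t : cantor_space := fun i => `[< S i /\ forall k, (n k <= i < n k.+1)%nat ->
   (forall i', (n k <= i' < n k.+1)%nat -> S i') -> (next (k, n k)).1 i >].
have [j _ Fjt] : (\bigcup_n F n) t.
  by apply: IF; apply: Isub IS => i /asboolP[].
have [k jk Sk] := full j.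
apply: (proj2 (nextP (k, n k)) t); last by exists j.
move=> i ik; apply/asboolP/idP => [[_]|tki]; first exact.
by split => [|k' ik' _]; [exact: Sk|rewrite -(incr_block_uniq n_incr ik ik')].
Qed.

(** * Subseries *)

Section MaskedSeries.
Variable V : normedModType R.
Implicit Types (x : nat -> V) (t : nat -> bool).

Definition masked t x n : V := ((t n : nat)%:R : R) *: x n.

Lemma sum_masked t x a b :
  \sum_(a <= i < b) masked t x i = \sum_(a <= i < b | t i) x i.
Proof.
rewrite [RHS]big_mkcond; apply: eq_bigr => i _.
by rewrite /masked; case: (t i); rewrite ?scale1r ?scale0r.
Qed.

Definition subseries_cauchy x : Prop :=
  forall eps : R, 0 < eps -> exists N, forall t a b, (N <= a)%nat ->
    `|\sum_(a <= i < b) masked t x i| < eps.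

Lemma not_subseries_cauchyP x : ~ subseries_cauchy x ->
  exists2 eps : R, 0 < eps & forall N, exists t a b,
    [/\ (N <= a)%nat, (a <= b)%nat & eps <= `|\sum_(a <= i < b) masked t x i|].
Proof.
move=> ncc; apply: contrapT => noeps; apply: ncc => eps eps0.
apply: contrapT => noN; apply: noeps; exists eps => // N.
apply: contrapT => notab; apply: noN; exists N => t a b Na.
rewrite ltNge; apply/negP => big; apply: notab; exists t, a, b; split => //.
rewrite leqNgt; apply/negP => ba; move: big.
by rewrite big_geq ?(ltnW ba) // normr0 leNgt eps0.
Qed.

End MaskedSeries.

Lemma cvg_Iconverges (K : numFieldType) (W : normedModType K) I (y : nat -> W) l :
  is_ideal I -> y @ \oo --> l -> Iconverges_to I y l.
Proof.
move=> [_ Isub _ Ifin] yl eps eps0.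
have [N _ yNl] := proj1 (cvgrPdist_le _ _) yl eps eps0.
apply: (Isub `I_N); last exact: Ifin (finite_II N).
move=> n /= epsn; rewrite ltnNge; apply/negP => Nn.
by move: (yNl n Nn); rewrite distrC => /(lt_le_trans epsn); rewrite ltxx.
Qed.

Section CompleteSpace.
Variable X : completeNormedModType R.
Implicit Types (x : nat -> X).

Lemma subseries_cauchy_cvg x t : subseries_cauchy x -> cvg (series (masked t x) @ \oo).
Proof.
move=> cc; apply/cauchy_cvgP/cauchy_seriesP => e e0.
have [N NP] := cc e e0.
exists ([set m | (N <= m)%nat], [set m | (N <= m)%nat]) => [|[a b] /= [Na _]].
  by split; exists N.
exact: NP.
Qed.

Lemma subseries_cauchy_A_setT I x : is_ideal I -> subseries_cauchy x -> A_set I x = setT.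
Proof.
move=> II cc; apply/seteqP; split => // t _.
exists (lim (series (masked t x) @ \oo)).
by apply: (cvg_Iconverges II); exact: subseries_cauchy_cvg.
Qed.

Lemma subseries_cauchy_uncond x :
  subseries_cauchy x -> unconditionally_convergent x.
Proof.
move=> cc p [q pK qK]; apply/cauchy_cvgP/cauchy_seriesP => e e0.
have [N NP] := cc e e0.
pose M := \max_(i < N) (q i).+1.
exists ([set m | (M <= m)%nat], [set m | (M <= m)%nat]) => [|[a b] /= [Ma _]].
  by split; exists M.
pose K := \max_(k < b) (p k).+1.
have pab k : (a <= k < b)%nat -> (N <= p k < K)%nat.
  move=> /andP[ak kb]; rewrite (leq_bigmax (F := fun k : 'I_b => (p k).+1) (Ordinal kb)).
  rewrite andbT leqNgt; apply/negP => pkN.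
  have /= := leq_bigmax (F := fun i : 'I_N => (q i).+1) (Ordinal pkN).
  by rewrite pK => kM; move: ak; rewrite leqNgt (leq_trans kM Ma).
rewrite (sum_comp_inj _ (can_inj pK) pab).
by rewrite -(sum_masked (fun i => i \in map p (index_iota a b))); exact: NP.
Qed.

Lemma uncond_subseries_cauchy x :
  unconditionally_convergent x -> subseries_cauchy x.
Proof.
move=> uc; apply: contrapT => /not_subseries_cauchyP[eps eps0 big].
have /choice[w wP] : forall m, exists w : (nat -> bool) * nat * nat,
    [/\ (m < w.1.2)%nat, (w.1.2 <= w.2)%nat &
        eps <= `|\sum_(w.1.2 <= i < w.2) masked w.1.1 x i|].
  by move=> m; have [t [a [b [ma ab ?]]]] := big m.+1; exists (t, a, b).
pose c := fix c k := if k is k'.+1 then (w (c k')).2 else 0%nat.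
have c_incr k : (c k < c k.+1)%nat.
  by have [ca ab _] := wP (c k); exact: leq_trans ca ab.
pose P k i := (w (c k)).1.1 i && ((w (c k)).1.2 <= i)%nat.
have [p pbij front] := blockwise_front_perm X P erefl c_incr.
have [[B1 B2] /= [[N1 _ B1N] [N2 _ B2N]] cauchy] :=
  proj1 (cauchy_seriesP _) (proj2 (cauchy_cvgP _) (uc p pbij)) eps eps0.
set k := maxn N1 N2; have kc : (k <= c k)%nat := incr_geq_id c_incr k.
have [r frontk] := front k.
have : `|\sum_(c k <= i < c k + r) x (p i)| < eps.
  apply: (cauchy (c k, c k + r)%nat); split.
  - by apply: B1N; apply: leq_trans kc; exact: leq_maxl.
  - by apply: B2N; apply: leq_trans (leq_addr _ _); apply: leq_trans kc; exact: leq_maxr.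
have [cA _ epsT] := wP (c k).
by rewrite frontk -(big_nat_widenl _ _ _ _ _ (ltnW cA)) -sum_masked ltNge epsT.
Qed.

End CompleteSpace.

Section JumpSets.
Variables (V : normedModType R) (x : nat -> V) (n : nat -> nat) (eps : R).
Hypothesis n_incr : forall k, (n k < n k.+1)%nat.

Definition off_block (t : nat -> bool) k :=
  forall i, (n k <= i < n k.+1)%nat -> t i = false.

Definition jump_set j : set cantor_space := [set t | exists k k',
  [/\ (j <= k < k')%nat, off_block t k, off_block t k' &
      eps <= `|\sum_(n k.+1 <= i < n k') masked t x i|]].

Lemma cyl_nowhere_dense_jump_setC j : (forall N, exists t a b, [/\ (N <= a)%nat, (a <= b)%nat &
    eps <= `|\sum_(a <= i < b) masked t x i|]) -> cyl_nowhere_dense (~` jump_set j).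
Proof.
move=> big g N; set k := maxn j N.
have [t0 [a [b [ka ab t0big]]]] := big (n k.+1).
set k' := maxn b k.+1; have kk' : (k < k')%nat := leq_maxr b k.+1.
have le_n := incr_homo_leq n_incr.
have Nk : (N <= n k)%nat := leq_trans (leq_maxr j N) (incr_geq_id n_incr k).
have bk' : (b <= n k')%nat := leq_trans (leq_maxl b k.+1) (incr_geq_id n_incr k').
have k1k' : (n k.+1 <= n k')%nat := le_n _ _ kk'.
pose h i := if (i < N)%nat then g i else (a <= i < b)%nat && t0 i.
exists h, (n k'.+1); split => [||s hs].
- exact: leq_trans Nk (le_n _ _ (leq_trans (ltnW kk') (leqnSn k'))).
- by move=> i iN; rewrite /h iN.
have sh i : (N <= i < n k'.+1)%nat -> s i = (a <= i < b)%nat && t0 i.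
  by move=> /andP[Ni iM]; rewrite hs // /h ltnNge Ni.
have Nk1 : (N <= n k.+1)%nat := leq_trans Nk (ltnW (n_incr k)).
apply; exists k, k'; split.
- by rewrite leq_maxl kk'.
- move=> i /andP[ki ik]; rewrite sh; first by rewrite leqNgt (leq_trans ik ka).
  by rewrite (leq_trans Nk ki) (leq_trans ik (leq_trans k1k' (ltnW (n_incr k')))).
- move=> i /andP[k'i ik']; rewrite sh; first by rewrite ltnNge (leq_trans bk' k'i) andbF.
  by rewrite ik' (leq_trans (leq_trans Nk1 k1k') k'i).
rewrite (eq_big_nat _ _ (F2 := masked (fun i => (a <= i < b)%nat && t0 i) x)).
  by rewrite sum_masked (big_nat_window _ _ ka bk') -sum_masked.
move=> i /andP[k1i ik']; rewrite /masked sh // (leq_trans Nk1 k1i) /=.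
exact: ltn_trans ik' (n_incr k').
Qed.

Lemma series_off_block t k : off_block t k ->
  forall i, (n k <= i <= n k.+1)%nat -> series (masked t x) i = series (masked t x) (n k).
Proof.
by move=> tk; apply: series_eq_on_zeros => i /tk ti; rewrite /masked ti scale0r.
Qed.

Lemma Iconvergent_not_jump (I : set (set nat)) t : 0 < eps ->
  (forall S, I S -> exists j, forall k, (j <= k)%nat ->
     exists2 i, (n k <= i < n k.+1)%nat & ~ S i) ->
  series_Iconvergent I (masked t x) -> exists j, ~ jump_set j t.
Proof.
move=> eps0 tal [l tl]; set u := series (masked t x).
have [j far] := tal _ (tl (eps / 3) (divr_gt0 eps0 (ltr0n _ 3))).
exists j => -[k [k' [/andP[jk kk'] tk tk' big]]].
have near_l k1 : (j <= k1)%nat -> off_block t k1 -> `|u (n k1) - l| <= eps / 3.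
  move=> jk1 tk1; have [i /andP[ki ik] nSi] := far k1 jk1.
  by rewrite /u -(series_off_block (i := i) tk1) ?ki ?(ltnW ik) // leNgt; exact/negP.
have lk : `|u (n k.+1) - l| <= eps / 3.
  by rewrite /u (series_off_block tk) ?(ltnW (n_incr k)) ?leqnn //; exact: near_l.
have lk' : `|u (n k') - l| <= eps / 3 := near_l k' (leq_trans jk (ltnW kk')) tk'.
move: big; rewrite -sub_series_geq ?(incr_homo_leq n_incr kk') // -/u.
have := ler_distD l (u (n k')) (u (n k.+1)); rewrite (distrC l).
lra.
Qed.

End JumpSets.

Lemma A_set_meager I (X : normedModType R) (x : nat -> X) : is_ideal I ->
  meager (ideal_in_cantor I) -> ~ subseries_cauchy x -> meager (A_set I x).
Proof.
move=> II mI /not_subseries_cauchyP[eps eps0 big].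
have [n [n_incr tal]] := meager_ideal_blocks II mI.
exists (fun j => ~` jump_set x n eps j); split => [j|t At].
  by apply/nowhere_denseP; exact: cyl_nowhere_dense_jump_setC.
by have [j njt] := Iconvergent_not_jump n_incr eps0 tal At; exists j.
Qed.

Theorem corollary3p3 (I : set (set nat)) (X : completeNormedModType R)
    (x : nat -> X) :
  is_ideal I -> baire_property (ideal_in_cantor I) ->
  (unconditionally_convergent x <-> ~ meager (A_set I x)).
Proof.
move=> II bp; split => [uc|nmA].
  rewrite (subseries_cauchy_A_setT II (uncond_subseries_cauchy uc)) => mT.
  exact: (@cylinder_not_meager (fun=> false) 0%nat) (meager_sub _ mT).
apply: subseries_cauchy_uncond; apply: contrapT => ncc.
exact/nmA/(A_set_meager II (ideal_meager II bp) ncc).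
Qed.
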